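(* Assume (H1) and (H2) of the standing setting. Let $w\in V$ and $f\in H$. Then for every $\lambda\ge C_{\theta_1,1/4}\|w\|_V^{\theta_1}$ there exists $u\in V$ such that $$\lambda(u,v-u)+a(u,v-u)+\langle B(w,u),v-u\rangle+\varphi(v)-\varphi(u)\ge (f,v-u)\qquad\forall v\in V. \tag{O}$$ In particular, $u\in D(\partial\varphi)$.
   Context: Standing setting. $V\subset H\subset V'$ is a Gelfand triple of real Hilbert spaces ($H$ identified with its dual), with continuous and dense embeddings, and the embedding $V\hookrightarrow H$ is compact. $(\cdot,\cdot)$ denotes the inner product of $H$ and $\langle\cdot,\cdot\rangle$ the duality pairing between $V'$ and $V$. $a:V\times V\to\mathbb R$ is a bounded bilinear form with $a(u,u)\ge\alpha\|u\|^2$ for some $\alpha>0$; the norm of $V$ is taken to be $\|u\|_V:=\sqrt{a(u,u)}$. $B:V\times V\to V'$ is a bilinear operator with $|\langle B(u,v),w\rangle|\le C_B\|u\|_V\|v\|_V\|w\|_V$ for all $u,v,w\in V$. $\varphi:V\to(-\infty,+\infty]$ is convex, proper and lower semicontinuous, $D(\varphi)=\{v:\varphi(v)<\infty\}$, and $\varphi(v)\ge-C_{\varphi1}(\|v\|_V+1)$ for all $v$ for some constant $C_{\varphi1}>0$; $\partial\varphi(u)=\{\xi\in V':\langle\xi,v-u\rangle\le\varphi(v)-\varphi(u)\ \forall v\in V\}$, $D(\partial\varphi)=\{u:\partial\varphi(u)\ne\emptyset\}$. (H1) There are $C>0$, $\beta_1\in(0,1]$ with $|\langle B(u,v),v\rangle|\le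 C\|u\|_V\|v\|_V\|v\|_H^{\beta_1}\|v\|_V^{1-\beta_1}$ for all $u,v\in V$. Set $\theta_1:=2/\beta_1$; by Young's inequality, for every $\epsilon>0$ there is a constant $C_{\theta_1,\epsilon}>0$ (fixed once and for all) with $|\langle B(u,v),v\rangle|\le C_{\theta_1,\epsilon}\|u\|_V^{\theta_1}\|v\|_H^2+\epsilon\|v\|_V^2$ for all $u,v\in V$. (H2) For each fixed $u\in V$: if $v_j\rightharpoonup v$ and $w_j\rightharpoonup w$ weakly in $V$, then $\langle B(u,v_j),w_j\rangle\to\langle B(u,v),w\rangle$. *)

From HB Require Import structures.
From mathcomp Require Import all_boot all_order all_algebra.
From mathcomp Require Import all_classical all_reals all_analysis.
Set Implicit Arguments. Unset Strict Implicit. Unset Printing Implicit Defensive.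
Import Order.TTheory GRing.Theory Num.Theory.
Import numFieldNormedType.Exports.
Local Open Scope classical_set_scope.
Local Open Scope ring_scope.

Section Defs.
Context {R : realType}.

Definition is_linear_fun (V : normedModType R) (l : V -> R) :=
  (forall x y, l (x + y) = l x + l y) /\ (forall (c : R) x, l (c *: x) = c * l x).

Definition is_linear_map (V W : normedModType R) (f : V -> W) :=
  (forall x y, f (x + y) = f x + f y) /\ (forall (c : R) x, f (c *: x) = c *: f x).

(* ip is an inner product inducing the norm of V (so a complete V is a
   real Hilbert space) *)
Definition is_inner_product (V : normedModType R) (ip : V -> V -> R) :=
  [/\ forall y, is_linear_fun (fun x => ip x y),
      forall x y, ip x y = ip y x &
      forall x, ip x x = `|x| ^+ 2].

Definition is_bounded_bilinear (V : normedModType R) (a : V -> V -> R) :=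
  [/\ forall y, is_linear_fun (fun x => a x y),
      forall x, is_linear_fun (fun y => a x y) &
      exists M : R, forall x y, `|a x y| <= M * `|x| * `|y|].

Definition is_dual_elt (V : normedModType R) (xi : V -> R) :=
  is_linear_fun xi /\ exists M : R, forall v, `|xi v| <= M * `|v|.

Definition weak_cvg (V : normedModType R) (u : nat -> V) (x : V) :=
  forall l : V -> R, is_dual_elt l -> (l \o u) @ \oo --> l x.

Definition convex_efun (V : normedModType R) (phi : V -> \bar R) :=
  forall (t : R) (x y : V), 0 < t < 1 ->
    let z : V := t *: x + (1 - t) *: y in
    (phi z <= t%:E * phi x + (1 - t)%:E * phi y)%E.

Definition effdom (V : normedModType R) (phi : V -> \bar R) : set V :=
  [set v | (phi v < +oo)%E].

Definition dom_subdiff (V : normedModType R) (phi : V -> \bar R) : set V :=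
  [set u | exists xi : V -> R, is_dual_elt xi /\
      forall v, ((xi (v - u))%:E <= phi v - phi u)%E].

End Defs.

From HB Require Import structures.
From mathcomp Require Import all_boot all_order all_algebra.
From mathcomp Require Import all_classical all_reals all_analysis.
From mathcomp Require Import ring lra.
Import Order.TTheory GRing.Theory Num.Theory.
Import numFieldNormedType.Exports.
Local Open Scope classical_set_scope.
Local Open Scope ring_scope.

(* Adding [lambda] times the H-inner product to [a] absorbs the part of
   [<B(w, v), v>] that the Young inequality of (H1) does not control by
   [a(v, v) / 4]; the form [c(u, v) = lambda (u, v) + a(u, v) + <B(w, u), v>]
   is therefore bounded and coercive on V.  The inequality (O) is then an
   elliptic variational inequality of the second kind for [c], solved by
   Stampacchia's argument: the proximal map of [phi] exists by minimising a
   strongly convex energy (completeness plus lower semicontinuity), and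
   composing it with a Riesz-shifted step is a contraction, so Banach's fixed
   point theorem applies. *)

Section LinearFun.
Context {R : realType} {V : normedModType R} {l : V -> R} (hl : is_linear_fun l).

Lemma linD x y : l (x + y) = l x + l y.
Proof. exact: hl.1. Qed.

Lemma linZ k x : l (k *: x) = k * l x.
Proof. exact: hl.2. Qed.

Lemma linN x : l (- x) = - l x.
Proof. by rewrite -scaleN1r linZ mulN1r. Qed.

Lemma linB x y : l (x - y) = l x - l y.
Proof. by rewrite linD linN. Qed.

End LinearFun.

Section InnerProduct.
Context {R : realType} {V : normedModType R} {ip : V -> V -> R}
  (hip : is_inner_product ip).

Lemma ipC x y : ip x y = ip y x.
Proof. by case: hip. Qed.

Lemma ipxx x : ip x x = `|x| ^+ 2.
Proof. by case: hip. Qed.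

Lemma ip_linl y : is_linear_fun (ip^~ y).
Proof. by case: hip. Qed.

Lemma ip_linr x : is_linear_fun (ip x).
Proof.
split=> [y z|k y]; rewrite !(ipC x); [exact: (ip_linl x).1 | exact: (ip_linl x).2].
Qed.

Lemma ipDl x y z : ip (x + y) z = ip x z + ip y z.
Proof. by have := linD (ip_linl z); apply. Qed.

Lemma ipDr x y z : ip z (x + y) = ip z x + ip z y.
Proof. by have := linD (ip_linr z); apply. Qed.

Lemma ipBl x y z : ip (x - y) z = ip x z - ip y z.
Proof. by have := linB (ip_linl z); apply. Qed.

Lemma ipBr x y z : ip z (x - y) = ip z x - ip z y.
Proof. by have := linB (ip_linr z); apply. Qed.

Lemma ipZl k x z : ip (k *: x) z = k * ip x z.
Proof. by have := linZ (ip_linl z); apply. Qed.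

Lemma ipZr k x z : ip z (k *: x) = k * ip z x.
Proof. by have := linZ (ip_linr z); apply. Qed.

Lemma ipNl x z : ip (- x) z = - ip x z.
Proof. by have := linN (ip_linl z); apply. Qed.

Lemma ipNr x z : ip z (- x) = - ip z x.
Proof. by have := linN (ip_linr z); apply. Qed.

Lemma normD_sqr x y : `|x + y| ^+ 2 = `|x| ^+ 2 + 2 * ip x y + `|y| ^+ 2.
Proof. by rewrite -!ipxx ipDl !ipDr (ipC y x); ring. Qed.

Lemma norm_convex_sqr (x y : V) (t : R) : `|t *: x + (1 - t) *: y| ^+ 2 =
  t * `|x| ^+ 2 + (1 - t) * `|y| ^+ 2 - t * (1 - t) * `|x - y| ^+ 2.
Proof.
rewrite -!ipxx !(ipDl, ipDr, ipBl, ipBr, ipZl, ipZr, ipNl, ipNr) (ipC y x); ring.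
Qed.

Lemma ler_ip x y : ip x y <= `|x| * `|y|.
Proof.
have : `|x + y| ^+ 2 <= (`|x| + `|y|) ^+ 2.
  by rewrite lerXn2r ?nnegrE ?addr_ge0 // ler_normD.
rewrite normD_sqr; nra.
Qed.

Lemma ler_norm_ip x y : `|ip x y| <= `|x| * `|y|.
Proof.
rewrite ler_norml ler_ip andbT; have := ler_ip x (- y).
by rewrite ipNr normrN; lra.
Qed.

End InnerProduct.

Section ExtendedReals.
Context {R : realType}.

Lemma fin_num_lty {x : \bar R} : x != -oo%E -> (x < +oo)%E -> x \is a fin_num.
Proof. by rewrite fin_numE => -> /lt_eqF ->. Qed.

Lemma le_EFinD_of_subr_ge0 (A B : R) (p q : \bar R) : p != -oo%E ->
  q \is a fin_num -> (0 <= (A - B)%:E + p - q)%E -> (B%:E <= A%:E + p - q)%E.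
Proof.
move=> hp hq; rewrite -(fineK hq).
case: p hp => [r| |] //= _; last by move=> _; rewrite addey // addye // leey.
by rewrite -!EFinD !lee_fin; lra.
Qed.

Lemma le_EFinB_of_subr_ge0 (A B : R) (p q : \bar R) : p != -oo%E ->
  q \is a fin_num -> (0 <= (A - B)%:E + p - q)%E -> ((B - A)%:E <= p - q)%E.
Proof.
move=> hp hq; rewrite -(fineK hq).
case: p hp => [r| |] //= _; last by move=> _; rewrite addye // leey.
by rewrite -!EFinD !lee_fin; lra.
Qed.

End ExtendedReals.

Lemma ler_of_mul1Bt_le {R : realType} {X c : R} : 0 <= c ->
  (forall t, 0 < t < 1 -> c * (1 - t) <= X) -> c <= X.
Proof.
move=> c0 H; rewrite leNgt; apply/negP => hX.
pose d := c - X; have d0 : 0 < d by rewrite /d subr_gt0.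
pose t := d / (d + c + 1).
have ht : t * (d + c + 1) = d by rewrite /t mulfVK // gt_eqF //; lra.
have t0 : 0 < t by rewrite /t divr_gt0 //; lra.
have t1 : t < 1 by nra.
have := H t; rewrite t0 t1 /= => /(_ isT); rewrite /d in ht d0; nra.
Qed.

(* With [c = mu (.,.)] this characterises the proximal point of [psi / mu]
   at the Riesz representative of [L / mu]. *)
Definition variational_ineq {R : realType} {V : normedModType R}
    (c : V -> V -> R) (L : V -> R) (psi : V -> \bar R) (u : V) :=
  forall v, (0 <= (c u (v - u) - L (v - u))%:E + psi v - psi u)%E.

Section ProximalPoint.
Context {R : realType} {V : completeNormedModType R} {ip : V -> V -> R}
  (hip : is_inner_product ip) {mu : R} (hmu : 0 < mu)
  {l : V -> R} (hl : is_linear_fun l) {K : R} (hK0 : 0 <= K)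
  (hK : forall e, `|l e| <= K * `|e|)
  {psi : V -> \bar R} (hninf : forall v, psi v != -oo%E)
  (hprop : exists v, (psi v < +oo)%E) (hconv : convex_efun psi)
  (hlsc : lower_semicontinuous psi) {c1 c2 : R}
  (hlb : forall v, ((- (c1 * `|v| + c2))%:E <= psi v)%E).

Let D v := (psi v < +oo)%E.
Let quad v := mu / 2 * `|v| ^+ 2 - l v.
Let energy v := quad v + fine (psi v).

Let psi_finE {v} : D v -> psi v = (fine (psi v))%:E.
Proof. by move=> Dv; rewrite fineK // fin_num_lty. Qed.

Let energy_convex {x y} {t : R} : D x -> D y -> 0 < t < 1 ->
  D (t *: x + (1 - t) *: y) /\
  energy (t *: x + (1 - t) *: y) <=
    t * energy x + (1 - t) * energy y - mu / 2 * (t * (1 - t)) * `|x - y| ^+ 2.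
Proof.
move=> Dx Dy ht; have /= hc := hconv t x y ht.
rewrite (psi_finE Dx) (psi_finE Dy) -!EFinM -EFinD in hc.
have Dz : D (t *: x + (1 - t) *: y) by apply: (le_lt_trans hc); exact: ltry.
split=> //; rewrite (psi_finE Dz) lee_fin in hc.
rewrite /energy /quad (norm_convex_sqr hip) (linD hl) !(linZ hl); lra.
Qed.

Let energy_has_inf : has_inf (energy @` D).
Proof.
split; first by case: hprop => v Dv; exists (energy v), v.
exists (- ((K + c1) ^+ 2 / (2 * mu) + c2)) => _ [v Dv <-].
have := hlb v; rewrite (psi_finE Dv) lee_fin => hv.
have lv : l v <= K * `|v| := le_trans (ler_norm _) (hK v).
(* completing the square in [`|v|] *)
have sq : mu / 2 * `|v| ^+ 2 - (K + c1) * `|v| + (K + c1) ^+ 2 / (2 * mu) =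
   (mu * `|v| - (K + c1)) ^+ 2 / (2 * mu) by field; rewrite gt_eqF.
have : 0 <= (mu * `|v| - (K + c1)) ^+ 2 / (2 * mu).
  by rewrite divr_ge0 ?sqr_ge0 // mulr_ge0 // ltW.
rewrite /energy /quad; lra.
Qed.

Let m := inf (energy @` D).

Let inf_le_energy {v} : D v -> m <= energy v.
Proof. by move=> Dv; apply: (ge_inf energy_has_inf.2); exists v. Qed.

Let near_minimizers_close {x y ex ey} : D x -> D y ->
  energy x < m + ex -> energy y < m + ey ->
  mu / 8 * `|x - y| ^+ 2 < (ex + ey) / 2.
Proof.
move=> Dx Dy hx hy.
have ht : 0 < (1 / 2 : R) < 1 by apply/andP; split; lra.
have [Dz hz] := energy_convex Dx Dy ht.
have := inf_le_energy Dz; lra.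
Qed.

Let minimizing_seq_cvg {xs : nat -> V} :
  (forall n, D (xs n) /\ energy (xs n) < m + n.+1%:R^-1) -> cvgn xs.
Proof.
move=> hxs; apply/cauchy_cvgP/cauchy_ballP => e e0; near_simpl.
have e2 : 0 < mu * e ^+ 2 / 8 by rewrite divr_gt0 // mulr_gt0 // exprn_gt0.
near=> n k; rewrite -ball_normE /ball_ /=.
have hn : n.+1%:R^-1 < mu * e ^+ 2 / 8.
  by near: n; exact: (near_infty_natSinv_lt (PosNum e2)).
have hk : k.+1%:R^-1 < mu * e ^+ 2 / 8.
  by near: k; exact: (near_infty_natSinv_lt (PosNum e2)).
have [Dn En] := hxs n; have [Dk Ek] := hxs k.
have close := near_minimizers_close Dn Dk En Ek.
rewrite ltNge; apply/negP => hle.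
have : e ^+ 2 <= `|xs n - xs k| ^+ 2 by rewrite lerXn2r // ?nnegrE // ltW.
move/(ler_wpM2l (ltW hmu)); move: hn hk close.
by move: (n.+1%:R^-1) (k.+1%:R^-1) => a b; lra.
Unshelve. all: end_near.
Qed.

Let quad_lower_near u x r : 0 <= r <= 1 -> `|u - x| <= r ->
  quad u - r * (mu * (`|u| + 2) + K) <= quad x.
Proof.
move=> /andP[r0 r1] hr.
have h1 : `|u| <= `|u - x| + `|x|.
  by rewrite -[X in `|X| <= _](subrK x u) ler_normD.
have h2 : `|x| <= `|u - x| + `|u|.
  by rewrite distrC -[X in `|X| <= _](subrK u x) ler_normD.
have h3 : l x - l u <= K * r.
  rewrite -(linB hl); apply: le_trans (ler_norm _) _.
  by apply: le_trans (hK _) _; rewrite ler_wpM2l // distrC.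
have h4 : `|u| ^+ 2 - `|x| ^+ 2 <= r * (2 * `|u| + 1).
  have := normr_ge0 x; have := normr_ge0 u => u0 x0.
  have p1 : 0 <= (r - (`|u| - `|x|)) * (`|u| + `|x|) by apply: mulr_ge0; lra.
  have p2 : 0 <= r * (`|u| + 1 - `|x|) by apply: mulr_ge0; lra.
  lra.
have := ler_wpM2l (ltW hmu) h4; have : 0 <= mu * r by rewrite mulr_ge0 // ltW.
rewrite /quad; lra.
Qed.

Let minimizing_seq_lim {xs : nat -> V} {u} :
  (forall n, D (xs n) /\ energy (xs n) < m + n.+1%:R^-1) -> xs @ \oo --> u ->
  D u /\ energy u <= m.
Proof.
move=> hxs cu; pose C0 := mu * (`|u| + 2) + K.
have C00 : 0 <= C0 by rewrite /C0 addr_ge0 // mulr_ge0 ?ltW // addr_ge0.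
(* [psi u <= liminf psi (xs n)] by lower semicontinuity, while [quad] is
   locally Lipschitz, so [energy u <= m]. *)
have psi_le eps : 0 < eps -> (psi u <= (m + eps - quad u)%:E)%E.
  move=> e0; rewrite leNgt; apply/negP => /hlsc [N hN HN].
  pose r := Num.min 1 (eps / (4 * (C0 + 1))).
  have r0 : 0 < r by rewrite lt_min ltr01 divr_gt0 // mulr_gt0 //; lra.
  have r1 : r <= 1 by rewrite ge_min lexx.
  have rC0 : r * (C0 + 1) <= eps / 4.
    have : r <= eps / (4 * (C0 + 1)) by rewrite ge_min lexx orbT.
    move/(ler_wpM2r (ltW (ltr_pwDr ltr01 C00 : 0 < C0 + 1))).
    suff -> : eps / (4 * (C0 + 1)) * (C0 + 1) = eps / 4 by [].
    by field; rewrite gt_eqF //; lra.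
  have e2 : 0 < eps / 2 by rewrite divr_gt0.
  have : \forall n \near \oo,
      [/\ N (xs n), `|u - xs n| < r & n.+1%:R^-1 < eps / 2].
    near=> n; split.
    - by near: n; apply: cu.
    - by near: n; move/cvgrPdist_lt : cu; apply.
    - by near: n; exact: (near_infty_natSinv_lt (PosNum e2)).
  case=> n0 _ /(_ n0 (leqnn n0)) [Nn un hn].
  have := HN _ Nn; have [Dn En] := hxs n0.
  rewrite (psi_finE Dn) lte_fin => hpsi.
  have := quad_lower_near u (xs n0) r; rewrite r1 (ltW r0) => /(_ isT (ltW un)).
  move: En hn; rewrite /energy -/C0; move: (n0.+1%:R^-1) => a En hn hq.
  lra.
have Du : D u by apply: (le_lt_trans (psi_le 1 ltr01)); exact: ltry.
split=> //; apply/ler_addgt0Pr => eps e0; have := psi_le _ e0.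
by rewrite (psi_finE Du) lee_fin /energy; lra.
Unshelve. all: end_near.
Qed.

Let exists_minimizer : exists2 u, D u & forall v, D v -> energy u <= energy v.
Proof.
have /choice [xs hxs] : forall n : nat, exists v, D v /\ energy v < m + n.+1%:R^-1.
  move=> n; have n0 : 0 < n.+1%:R^-1 :> R by rewrite invr_gt0.
  by have [_ [v Dv <-] hv] := inf_adherent n0 energy_has_inf; exists v.
have [Du Eu] := minimizing_seq_lim hxs (minimizing_seq_cvg hxs).
by exists (lim (xs @ \oo)) => // v /inf_le_energy; apply: le_trans.
Qed.

Let minimizer_variational u : D u -> (forall v, D v -> energy u <= energy v) ->
  variational_ineq (fun z e => mu * ip z e) l psi u.
Proof.
move=> Du umin v; have [Dv|nDv] := boolP (D v); last first.
  move: nDv; rewrite /D -leNgt leye_eq => /eqP ->.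
  by rewrite (psi_finE Du) addey // addye.
rewrite (psi_finE Dv) (psi_finE Du) -EFinD lee_fin.
have c0 : 0 <= mu / 2 * `|v - u| ^+ 2.
  by rewrite mulr_ge0 ?sqr_ge0 // divr_ge0 // ltW.
have /(ler_of_mul1Bt_le c0) : forall t : R, 0 < t < 1 ->
    mu / 2 * `|v - u| ^+ 2 * (1 - t) <= energy v - energy u.
  move=> t ht; have [Dz hz] := energy_convex Dv Du ht.
  have := umin _ Dz; move: ht => /andP[t0 t1]; nra.
rewrite /energy /quad.
have -> : `|v| ^+ 2 = `|u| ^+ 2 + 2 * ip u (v - u) + `|v - u| ^+ 2.
  by rewrite -(normD_sqr hip) addrC subrK.
by rewrite (linB hl); lra.
Qed.

Lemma exists_prox : exists z, (psi z < +oo)%E /\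
  variational_ineq (fun z e => mu * ip z e) l psi z.
Proof.
have [u Du umin] := exists_minimizer.
by exists u; split; last exact: minimizer_variational.
Qed.

End ProximalPoint.

Lemma variational_ineq_dist_le {R : realType} {V : normedModType R}
    {ip : V -> V -> R} (hip : is_inner_product ip) {psi : V -> \bar R}
    (hninf : forall v, psi v != -oo%E) (mu : R) {l1 l2 : V -> R}
    (hl1 : is_linear_fun l1) {z1 z2 : V} :
  (psi z1 < +oo)%E -> (psi z2 < +oo)%E ->
  variational_ineq (fun z e => mu * ip z e) l1 psi z1 ->
  variational_ineq (fun z e => mu * ip z e) l2 psi z2 ->
  mu * `|z1 - z2| ^+ 2 <= l1 (z1 - z2) - l2 (z1 - z2).
Proof.
move=> D1 D2 h1 h2; have := h1 z2; have := h2 z1.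
rewrite -(fineK (fin_num_lty (hninf z1) D1)) -(fineK (fin_num_lty (hninf z2) D2)).
rewrite -!EFinD !lee_fin -[z2 - z1]opprB (ipNr hip) (linN hl1).
have : mu * (ip z1 (z1 - z2) - ip z2 (z1 - z2)) = mu * `|z1 - z2| ^+ 2.
  by rewrite -(ipBl hip) (ipxx hip).
lra.
Qed.

Lemma riesz_representation {R : realType} {V : completeNormedModType R}
    {ip : V -> V -> R} (hip : is_inner_product ip) {l : V -> R}
    (hl : is_linear_fun l) {K : R} (hK0 : 0 <= K)
    (hK : forall e, `|l e| <= K * `|e|) :
  exists r, forall e, ip r e = l e.
Proof.
have [z [_ hz]] : exists z : V, ((0 : \bar R) < +oo)%E /\
    variational_ineq (fun z e => 1 * ip z e) l (fun=> 0%E) z.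
  apply: (@exists_prox _ _ _ hip _ ltr01 _ hl _ hK0 hK _ _ _ _ _ 0 0) => //.
  - by exists 0.
  - by move=> t x y _ /=; rewrite !mule0 adde0.
  - by move=> x a h; exists setT => //; exact: filterT.
exists z => e; have /= := hz (z + e); have /= := hz (z - e).
rewrite (addrC z e) (addrC z (- e)) !addrK !adde0 !sube0 !lee_fin !mul1r.
by rewrite (ipNr hip) (linN hl); lra.
Qed.

Section Stampacchia.
Context {R : realType} {V : completeNormedModType R} {ip : V -> V -> R}
  (hip : is_inner_product ip)
  {c : V -> V -> R} (hc1 : forall y, is_linear_fun (c^~ y))
  (hc2 : forall x, is_linear_fun (c x))
  {M : R} (hM : forall x y, `|c x y| <= M * `|x| * `|y|)
  {al : R} (hal : 0 < al) (hcoer : forall x, al * `|x| ^+ 2 <= c x x)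
  {L : V -> R} (hL : is_linear_fun L) {KL : R} (hKL0 : 0 <= KL)
  (hKL : forall e, `|L e| <= KL * `|e|)
  {psi : V -> \bar R} (hninf : forall v, psi v != -oo%E)
  (hprop : exists v, (psi v < +oo)%E) (hconv : convex_efun psi)
  (hlsc : lower_semicontinuous psi) {c1 c2 : R}
  (hlb : forall v, ((- (c1 * `|v| + c2))%:E <= psi v)%E).

Let M1 := `|M| + al.

Let M1_gt0 : 0 < M1.
Proof. by rewrite /M1 ltr_wpDl. Qed.

Let c_bounded x y : `|c x y| <= M1 * `|x| * `|y|.
Proof.
apply: le_trans (hM x y) _; rewrite -!mulrA ler_wpM2r ?mulr_ge0 //.
by rewrite /M1 (le_trans (ler_norm M)) // lerDl ltW.
Qed.

Let riesz_c d : exists r, forall e, ip r e = c d e.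
Proof.
by apply: (riesz_representation hip (hc2 d) _ (c_bounded d));
  rewrite mulr_ge0 // ltW.
Qed.

Let rr d := projT1 (cid (riesz_c d)).
Let rrE d e : ip (rr d) e = c d e := projT2 (cid (riesz_c d)) e.

Let mu := M1 ^+ 2 / al.

Let mu_gt0 : 0 < mu.
Proof. by rewrite divr_gt0 // exprn_gt0. Qed.

Let M1_le_mu : M1 <= mu.
Proof.
have alM1 : al <= M1 by rewrite /M1 lerDr.
rewrite /mu ler_pdivlMr // expr2 ler_pM2l //.
Qed.

(* [u |-> prox(step u)] is Stampacchia's map [u |-> P(u - (A u - L) / mu)]. *)
Let step u e := mu * ip u e - c u e + L e.

Let step_lin u : is_linear_fun (step u).
Proof.
split=> [x y|k x]; rewrite /step.
  by rewrite (ipDr hip) (linD (hc2 u)) (linD hL); ring.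
by rewrite (ipZr hip) (linZ (hc2 u)) (linZ hL); ring.
Qed.

Let step_bounded u e : `|step u e| <= (mu * `|u| + M1 * `|u| + KL) * `|e|.
Proof.
rewrite /step; apply: le_trans (ler_normD _ _) _.
apply: le_trans (lerD (ler_normB _ _) (lexx _)) _.
rewrite normrM (gtr0_norm mu_gt0).
have := ler_wpM2l (ltW mu_gt0) (ler_norm_ip hip u e).
have := c_bounded u e; have := hKL e; nra.
Qed.

Let prox_step u : exists z, (psi z < +oo)%E /\
  variational_ineq (fun z e => mu * ip z e) (step u) psi z.
Proof.
apply: (exists_prox hip mu_gt0 (step_lin u) _ (step_bounded u) hninf hprop
  hconv hlsc hlb).
by rewrite !addr_ge0 // mulr_ge0 // ltW.
Qed.

Let T u := projT1 (cid (prox_step u)).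
Let TP u := projT2 (cid (prox_step u)).

Let shift_norm_le d : `|mu *: d - rr d| ^+ 2 <= (mu ^+ 2 - M1 ^+ 2) * `|d| ^+ 2.
Proof.
have rr_le : `|rr d| <= M1 * `|d|.
  have := normr_ge0 (rr d); rewrite le0r => /orP[/eqP->|rr0].
    by rewrite mulr_ge0 // ltW.
  rewrite -(ler_pM2r rr0) -expr2 -(ipxx hip) rrE.
  exact: le_trans (ler_norm _) (c_bounded _ _).
have rr_sqr : `|rr d| ^+ 2 <= M1 ^+ 2 * `|d| ^+ 2.
  by rewrite -exprMn lerXn2r // ?nnegrE // mulr_ge0 // ltW.
have coer : mu * (al * `|d| ^+ 2) <= mu * ip (rr d) d.
  by rewrite rrE ler_wpM2l // ltW.
have mual : mu * (al * `|d| ^+ 2) = M1 ^+ 2 * `|d| ^+ 2.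
  by rewrite mulrA /mu mulfVK // gt_eqF.
rewrite -(ipxx hip) !(ipBl hip, ipBr hip, ipZl hip, ipZr hip) (ipC hip d (rr d)).
rewrite !(ipxx hip); lra.
Qed.

Let q := (mu ^+ 2 - M1 ^+ 2) / mu ^+ 2.

Let q_ge0 : 0 <= q.
Proof.
by rewrite /q divr_ge0 ?sqr_ge0 // subr_ge0 lerXn2r // ?nnegrE ltW.
Qed.

Let q_lt1 : q < 1.
Proof. by rewrite /q ltr_pdivrMr ?exprn_gt0 // mul1r ltrBlDr ltrDl exprn_gt0. Qed.

Let T_lipschitz u1 u2 : `|T u1 - T u2| <= Num.sqrt q * `|u1 - u2|.
Proof.
have [D1 h1] := TP u1; have [D2 h2] := TP u2.
have := variational_ineq_dist_le hip hninf mu (step_lin u1) D1 D2 h1 h2.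
rewrite -/(T u1) -/(T u2); set e := T u1 - T u2; set d := u1 - u2.
have -> : step u1 e - step u2 e = ip (mu *: d - rr d) e.
  by rewrite (ipBl hip) (ipZl hip) rrE /step /d (ipBl hip) (linB (hc1 e)); ring.
move=> /le_trans /(_ (ler_ip hip _ _)) mono.
have mu_e : mu * `|e| <= `|mu *: d - rr d|.
  have := normr_ge0 e; rewrite le0r => /orP[/eqP->|e0]; first by rewrite mulr0.
  by rewrite -(ler_pM2r e0) -mulrA -expr2.
have : (mu * `|e|) ^+ 2 <= (mu ^+ 2 - M1 ^+ 2) * `|d| ^+ 2.
  apply: le_trans (shift_norm_le d).
  by rewrite lerXn2r ?nnegrE // mulr_ge0 // ltW.
move=> key; rewrite -(ler_pXn2r (ltn0Sn 1)) ?nnegrE ?mulr_ge0 ?sqrtr_ge0 //.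
rewrite exprMn sqr_sqrtr // /q mulrAC ler_pdivlMr ?exprn_gt0 //.
by rewrite mulrC -exprMn.
Qed.

Lemma stampacchia : exists u, (psi u < +oo)%E /\ variational_ineq c L psi u.
Proof.
have ctr : is_contraction (totalfun T : {fun [set: V] >-> [set: V]}).
  exists (Num.sqrt q)%:nng; split => /=; first by rewrite -sqrtr1 ltr_sqrt.
  by move=> [x y] _ /=; exact: T_lipschitz.
have [p _ hp] := banach_fixed_point ctr closedT (ex_intro _ 0 I).
have [] := TP p; rewrite -/(T p) -[T p]/(totalfun T p) -hp => Dp hTp.
exists p; split => // v; have := hTp v.
by rewrite /step; congr (_ <= _ + _ - _)%E; congr (_%:E); ring.
Qed.

End Stampacchia.

Section PerturbedProblem.
Context {R : realType} {V H : completeNormedModType R}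
  {ipV : V -> V -> R} {ipH : H -> H -> R}
  (hipV : is_inner_product ipV) (hipH : is_inner_product ipH)
  {iota : V -> H} (hiota_lin : is_linear_map iota)
  {Ki : R} (hKi0 : 0 <= Ki) (hKi : forall x, `|iota x| <= Ki * `|x|)
  {a : V -> V -> R} {alpha : R}
  (ha : is_bounded_bilinear a) (halpha : 0 < alpha)
  (hcoer : forall u, alpha * `|u| ^+ 2 <= a u u)
  {b : V -> V -> V -> R} {CB : R}
  (hb_lin2 : forall u w, is_linear_fun (fun v => b u v w))
  (hb_lin3 : forall u v, is_linear_fun (fun w => b u v w))
  (hCB : forall u v w, `|b u v w| <=
           CB * Num.sqrt (a u u) * Num.sqrt (a v v) * Num.sqrt (a w w))
  {phi : V -> \bar R} {Cphi1 : R}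
  (hphi_ninf : forall v, phi v != -oo%E)
  (hphi_proper : exists v, (phi v < +oo)%E)
  (hphi_conv : convex_efun phi) (hphi_lsc : lower_semicontinuous phi)
  (hCphi1 : 0 < Cphi1)
  (hphi_lb : forall v, ((- (Cphi1 * (Num.sqrt (a v v) + 1)))%:E <= phi v)%E)
  {Cq th : R}
  (hCq_young : forall u v, `|b u v v| <=
         Cq * (Num.sqrt (a u u) `^ th) * `|iota v| ^+ 2
         + 4^-1 * Num.sqrt (a v v) ^+ 2)
  (w : V) (f : H) {lambda : R}
  (hlambda : Cq * (Num.sqrt (a w w) `^ th) <= lambda).

Let c x y := lambda * ipH (iota x) (iota y) + a x y + b w x y.
Let L e := ipH f (iota e).

Let c_linl y : is_linear_fun (c^~ y).
Proof.
have [[iD iZ] [aL _ _]] := (hiota_lin, ha).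
split=> [x1 x2|k x]; rewrite /c.
  by rewrite iD (ipDl hipH) (linD (aL y)) (linD (hb_lin2 w y)); ring.
by rewrite iZ (ipZl hipH) (linZ (aL y)) (linZ (hb_lin2 w y)); ring.
Qed.

Let c_linr x : is_linear_fun (c x).
Proof.
have [[iD iZ] [_ aR _]] := (hiota_lin, ha).
split=> [y1 y2|k y]; rewrite /c.
  by rewrite iD (ipDr hipH) (linD (aR x)) (linD (hb_lin3 w x)); ring.
by rewrite iZ (ipZr hipH) (linZ (aR x)) (linZ (hb_lin3 w x)); ring.
Qed.

Let a_ge0 x : 0 <= a x x.
Proof. by apply: le_trans (hcoer x); rewrite mulr_ge0 ?sqr_ge0 // ltW. Qed.

Let sqrt_a_bounded : exists2 S, 0 <= S & forall x, Num.sqrt (a x x) <= S * `|x|.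
Proof.
have [_ _ [Ma hMa]] := ha; exists (Num.sqrt `|Ma|) => [|x]; first exact: sqrtr_ge0.
rewrite -(ler_pXn2r (ltn0Sn 1)) ?nnegrE ?mulr_ge0 ?sqrtr_ge0 //.
rewrite exprMn !sqr_sqrtr //; apply: le_trans (ler_norm _) _.
by apply: le_trans (hMa x x) _; rewrite -mulrA ler_wpM2r ?mulr_ge0 ?ler_norm.
Qed.

Let c_bounded : exists M, forall x y, `|c x y| <= M * `|x| * `|y|.
Proof.
have [_ _ [Ma hMa]] := ha; have [S S0 hS] := sqrt_a_bounded.
exists (`|lambda| * Ki ^+ 2 + `|Ma| + `|CB| * Num.sqrt (a w w) * S ^+ 2) => x y.
have t1 : `|lambda * ipH (iota x) (iota y)| <= `|lambda| * (Ki * `|x| * (Ki * `|y|)).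
  rewrite normrM ler_wpM2l //; apply: le_trans (ler_norm_ip hipH _ _) _.
  by apply: ler_pM => //; exact: hKi.
have t2 : `|a x y| <= `|Ma| * `|x| * `|y|.
  by apply: le_trans (hMa x y) _; rewrite -!mulrA ler_wpM2r ?mulr_ge0 ?ler_norm.
have t3 : `|b w x y| <= `|CB| * Num.sqrt (a w w) * (S * `|x|) * (S * `|y|).
  apply: le_trans (hCB w x y) _.
  apply: le_trans (_ : _ <= `|CB| * Num.sqrt (a w w) * Num.sqrt (a x x)
                                 * Num.sqrt (a y y)) _.
    by rewrite -!mulrA ler_wpM2r ?mulr_ge0 ?sqrtr_ge0 // ler_norm.
  by rewrite !ler_pM ?mulr_ge0 ?sqrtr_ge0 ?normr_ge0.
rewrite /c; apply: le_trans (ler_normD _ _) _.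
apply: le_trans (lerD (ler_normD _ _) (lexx _)) _; lra.
Qed.

(* Young's inequality (H1) with [epsilon = 1/4] and the choice of [lambda]
   leave [3/4] of the coercivity of [a]. *)
Let c_coercive x : 3 / 4 * alpha * `|x| ^+ 2 <= c x x.
Proof.
have young := hCq_young w x; rewrite sqr_sqrtr // in young.
have : 0 <= (lambda - Cq * (Num.sqrt (a w w) `^ th)) * `|iota x| ^+ 2.
  by rewrite mulr_ge0 ?sqr_ge0 // subr_ge0.
have := hcoer x; have : - `|b w x x| <= b w x x by rewrite lerNl -normrN ler_norm.
rewrite /c (ipxx hipH); lra.
Qed.

Let L_lin : is_linear_fun L.
Proof.
have [iD iZ] := hiota_lin.
by split=> [x y|k x]; rewrite /L ?iD ?iZ ?(ipDr hipH) ?(ipZr hipH).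
Qed.

Let L_bounded e : `|L e| <= `|f| * Ki * `|e|.
Proof.
by apply: le_trans (ler_norm_ip hipH _ _) _; rewrite -mulrA ler_wpM2l.
Qed.

Lemma perturbed_variational_ineq : exists u : V,
    (forall v : V,
      ((lambda * ipH (iota u) (iota (v - u)) + a u (v - u) + b w u (v - u))%:E
        + phi v - phi u >= (ipH f (iota (v - u)))%:E)%E)
    /\ dom_subdiff phi u.
Proof.
have [S S0 hS] := sqrt_a_bounded; have [M hM] := c_bounded.
have phi_lb v : ((- (Cphi1 * S * `|v| + Cphi1))%:E <= phi v)%E.
  apply: le_trans (hphi_lb v); rewrite lee_fin.
  have := ler_wpM2l (ltW hCphi1) (hS v); lra.
have hal : 0 < 3 / 4 * alpha by rewrite mulr_gt0.
have [u [Du hu]] := stampacchia hipV c_linl c_linr hM hal c_coercive L_lin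
  (mulr_ge0 (normr_ge0 f) hKi0) L_bounded hphi_ninf hphi_proper hphi_conv
  hphi_lsc phi_lb.
have fu : phi u \is a fin_num := fin_num_lty (hphi_ninf u) Du.
exists u; split=> [v|]; first exact: le_EFinD_of_subr_ge0 (hphi_ninf v) fu (hu v).
exists (fun e => L e - c u e); split; last first.
  by move=> v; exact: le_EFinB_of_subr_ge0 (hphi_ninf v) fu (hu v).
split; first split=> [x y|k x].
- by rewrite (linD L_lin) (linD (c_linr u)); ring.
- by rewrite (linZ L_lin) (linZ (c_linr u)); ring.
exists (`|f| * Ki + M * `|u|) => e; apply: le_trans (ler_normB _ _) _.
have := L_bounded e; have := hM u e; lra.
Qed.

End PerturbedProblem.

Section ContinuousLinearMap.
Context {R : realType} {V W : normedModType R} {f : V -> W} (hf : is_linear_map f).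

Let f_linear : linear f.
Proof. by move=> k x y; rewrite hf.1 hf.2. Qed.

#[local] HB.instance Definition _ := GRing.isLinear.Build R V W *:%R f f_linear.

Lemma continuous_linear_map_bounded : continuous f ->
  exists2 k, 0 <= k & forall x, `|f x| <= k * `|x|.
Proof.
move=> /linear_bounded_continuous /linear_boundedP [M [_ hM]].
by exists (`|M| + 1); [rewrite addr_ge0 | apply: hM; rewrite ltr_pwDr // ler_norm].
Qed.

End ContinuousLinearMap.

Theorem mainTheorem3
  (R : realType)
  (* Gelfand triple V ⊂ H ⊂ V' : V, H real Hilbert spaces *)
  (V H : completeNormedModType R)
  (ipV : V -> V -> R) (ipH : H -> H -> R)
  (hipV : is_inner_product ipV) (hipH : is_inner_product ipH)
  (* the embedding V -> H: linear, injective, continuous, dense, compact *)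
  (iota : V -> H)
  (hiota_lin : is_linear_map iota)
  (hiota_inj : injective iota)
  (hiota_cont : continuous iota)
  (hiota_dense : closure (range iota) = setT)
  (hiota_cpt : forall M : R, compact (closure (iota @` [set x : V | `|x| <= M])))
  (* bounded coercive bilinear form a; the norm of V is sqrt (a u u) *)
  (a : V -> V -> R) (alpha : R)
  (ha : is_bounded_bilinear a) (halpha : 0 < alpha)
  (hcoer : forall u, a u u >= alpha * `|u| ^+ 2)
  (* B : V x V -> V', encoded by b u v w = <B(u,v), w> *)
  (b : V -> V -> V -> R) (CB : R)
  (hb_lin1 : forall v w, is_linear_fun (fun u => b u v w))
  (hb_lin2 : forall u w, is_linear_fun (fun v => b u v w))
  (hb_lin3 : forall u v, is_linear_fun (fun w => b u v w))
  (hCB : forall u v w, `|b u v w| <=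
           CB * Num.sqrt (a u u) * Num.sqrt (a v v) * Num.sqrt (a w w))
  (* phi : V -> (-oo, +oo] convex, proper, lsc, with linear lower bound *)
  (phi : V -> \bar R) (Cphi1 : R)
  (hphi_ninf : forall v, phi v != -oo%E)
  (hphi_proper : exists v, (phi v < +oo)%E)
  (hphi_conv : convex_efun phi)
  (hphi_lsc : lower_semicontinuous phi)
  (hCphi1 : 0 < Cphi1)
  (hphi_lb : forall v, (phi v >= (- (Cphi1 * (Num.sqrt (a v v) + 1)))%:E)%E)
  (* (H1) *)
  (C beta1 : R) (hC : 0 < C) (hbeta1 : 0 < beta1 <= 1)
  (H1 : forall u v, `|b u v v| <=
         C * Num.sqrt (a u u) * Num.sqrt (a v v)
           * (`|iota v| `^ beta1) * (Num.sqrt (a v v) `^ (1 - beta1)))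
  (* the constant C_{theta1, 1/4} from Young's inequality, theta1 = 2/beta1 *)
  (Cq : R) (hCq : 0 < Cq)
  (hCq_young : forall u v, `|b u v v| <=
         Cq * (Num.sqrt (a u u) `^ (2 / beta1)) * `|iota v| ^+ 2
         + 4^-1 * Num.sqrt (a v v) ^+ 2)
  (* (H2) *)
  (H2 : forall (u : V) (vj wj : nat -> V) (v w : V),
         weak_cvg vj v -> weak_cvg wj w ->
         (fun j => b u (vj j) (wj j)) @ \oo --> b u v w)
  (w : V) (f : H) (lambda : R)
  (hlambda : lambda >= Cq * (Num.sqrt (a w w) `^ (2 / beta1))) :
  exists u : V,
    (forall v : V,
      ((lambda * ipH (iota u) (iota (v - u)) + a u (v - u) + b w u (v - u))%:E
        + phi v - phi u >= (ipH f (iota (v - u)))%:E)%E)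
    /\ dom_subdiff phi u.
Proof.
have [Ki hKi0 hKi] := continuous_linear_map_bounded hiota_lin hiota_cont.
exact: (perturbed_variational_ineq hipV hipH hiota_lin hKi0 hKi ha halpha hcoer
  hb_lin2 hb_lin3 hCB hphi_ninf hphi_proper hphi_conv hphi_lsc hCphi1 hphi_lb
  hCq_young w f hlambda).
Qed.
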